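(* Let $u$ be a term of $\mathscr{L}_{\max}$ with no free variables and let $c$ be a constant symbol. For every $f:\mathbb{N}\to\mathbb{N}$, $\mathscr{M}_f\models u=c$ if and only if there is some $k\in\mathbb{N}$ such that for every $g:\mathbb{N}\to\mathbb{N}$ extending $(f(0),\ldots,f(k))$ (i.e. $g(i)=f(i)$ for all $i\le k$), $\mathscr{M}_g\models u=c$, and checking whether $\mathscr{M}_g\models u=c$ via the inductive definition of the semantics of $\mathscr{M}_g$ never requires querying $g(i)$ for any $i>k$.
   Context: $\mathbb{N}^{<\mathbb{N}}$ denotes the set of finite sequences of naturals. The language $\mathscr{L}_{\max}$ is a first-order language extended with ellipses. Its symbols: a constant symbol $\mathbf{n}$ (also written $\bar n$) for each $n\in\mathbb{N}$; an $n$-ary function symbol $\tilde w$ for each $w:\mathbb{N}^n\to\mathbb{N}$ ($n>0$); an $n$-ary predicate symbol $\tilde p$ for each $p\subseteq\mathbb{N}^n$ ($n>0$); an ''$\mathbb{N}^{<\mathbb{N}}$-ary'' function symbol $\tilde G$ for each $G:\mathbb{N}^{<\mathbb{N}}\to\mathbb{N}$; one extra unary function symbol $\mathbf{f}$; and, for each variable $x$, a logical symbol $\cdots_x$. Terms and their free variables: a variable $x$ (free variables $\{x\}$); a constant (no free variables); $h(t_1,\ldots,t_n)$ for $h$ an $n$-ary or $\mathbb{N}^{<\mathbb{N}}$-ary function symbol and terms $t_i$ (free variables the union); and, for an $\mathbb{N}^{<\mathbb{N}}$-ary $G$, terms $u,v$ and a variable $x$, the term $G(u(\mathbf{0}),\cdots_x,u(v))$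 with free variables $(FV(u)\setminus\{x\})\cup FV(v)$. Formulas are built from these terms as usual. Substitution $t(y|t')$ is defined as usual with two new cases: for $y\neq x$, $G(u(\mathbf{0}),\cdots_x,u(v))(y|t)=G(u(y|t)(\mathbf{0}),\cdots_x,u(y|t)(v(y|t)))$, and $G(u(\mathbf{0}),\cdots_x,u(v))(x|t)=G(u(\mathbf{0}),\cdots_x,u(v(x|t)))$. For $f:\mathbb{N}\to\mathbb{N}$, $\mathscr{M}_f$ is the structure with universe $\mathbb{N}$ interpreting $\mathbf{n}$ as $n$, $\tilde w$ as $w$, $\tilde p$ as $p$, $\tilde G$ as $G$, and $\mathbf{f}$ as $f$. Under an assignment $s$ of variables to naturals, terms are evaluated by the usual induction plus the clause $G(u(\mathbf{0}),\cdots_x,u(v))^{s}=G\big(u(x|\mathbf{0})^{s},\ldots,u(x|\overline{v^{s}})^{s}\big)$; satisfaction of formulas is then defined as usual. ''Querying $g(i)$'' means applying the interpretation $g$ of $\mathbf{f}$ to the argument $i$ during this inductive evaluation. *)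

From mathcomp Require Import all_boot.
Set Implicit Arguments. Unset Strict Implicit. Unset Printing Implicit Defensive.

(* Variables are indexed by nat.
   - TVar x                : the variable x
   - TConst n              : the constant symbol  n-bar
   - TFun w ts             : w~(t_0,...,t_n) for an (n+1)-ary w : N^(n+1) -> N
   - TG G ts               : G~(t_1,...,t_m) for G : N^{<N} -> N (any finite m)
   - Tf t                  : f(t)  (the extra unary symbol f)
   - TEll G x u v          : G~(u(0), ..._x, u(v))                              *)
Inductive term : Type :=
| TVar of nat
| TConst of nat
| TFun (n : nat) of (('I_n.+1 -> nat) -> nat) & ('I_n.+1 -> term)
| TG (m : nat) of (seq nat -> nat) & ('I_m -> term)
| Tf of term
| TEll of (seq nat -> nat) & nat & term & term.

Fixpoint fv (t : term) (z : nat) : bool :=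
  match t with
  | TVar y => y == z
  | TConst _ => false
  | TFun n _ ts => [exists i : 'I_n.+1, fv (ts i) z]
  | TG m _ ts => [exists i : 'I_m, fv (ts i) z]
  | Tf t1 => fv t1 z
  | TEll _ x u v => ((z != x) && fv u z) || fv v z
  end.

Fixpoint subst (y : nat) (t' : term) (t : term) : term :=
  match t with
  | TVar z => if z == y then t' else TVar z
  | TConst n => TConst n
  | TFun n w ts => TFun w (fun i => subst y t' (ts i))
  | TG m G ts => TG G (fun i => subst y t' (ts i))
  | Tf t1 => Tf (subst y t' t1)
  | TEll G x u v =>
      if x == y then TEll G x u (subst y t' v)
      else TEll G x (subst y t' u) (subst y t' v)
  end.

(* Eval g s t n q : t^s = n in M_g, and the evaluation queries g exactly at
   the elements of q. *)
Inductive Eval (g : nat -> nat) (s : nat -> nat) : term -> nat -> seq nat -> Prop :=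
| EVar x : Eval g s (TVar x) (s x) [::]
| EConst n : Eval g s (TConst n) n [::]
| EFun n (w : ('I_n.+1 -> nat) -> nat) (ts : 'I_n.+1 -> term)
       (vs : 'I_n.+1 -> nat) (qs : 'I_n.+1 -> seq nat) :
    (forall i, Eval g s (ts i) (vs i) (qs i)) ->
    Eval g s (TFun w ts) (w vs) (flatten [seq qs i | i <- enum 'I_n.+1])
| EG m (G : seq nat -> nat) (ts : 'I_m -> term)
     (vs : 'I_m -> nat) (qs : 'I_m -> seq nat) :
    (forall i, Eval g s (ts i) (vs i) (qs i)) ->
    Eval g s (TG G ts) (G [seq vs i | i <- enum 'I_m])
         (flatten [seq qs i | i <- enum 'I_m])
| Ef t n q : Eval g s t n q -> Eval g s (Tf t) (g n) (rcons q n)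
| EEll (G : seq nat -> nat) x u v m qv
       (vs : 'I_m.+1 -> nat) (qs : 'I_m.+1 -> seq nat) :
    Eval g s v m qv ->
    (forall k : 'I_m.+1, Eval g s (subst x (TConst k) u) (vs k) (qs k)) ->
    Eval g s (TEll G x u v) (G [seq vs k | k <- enum 'I_m.+1])
         (qv ++ flatten [seq qs k | k <- enum 'I_m.+1]).

Definition models_eq (g : nat -> nat) (u : term) (c : nat) : Prop :=
  forall s, exists q, Eval g s u c q.

Definition models_eq_bounded (g : nat -> nat) (u : term) (c : nat) (k : nat) : Prop :=
  forall s, exists q, Eval g s u c q /\ all (fun i => i <= k) q.

From mathcomp Require Import all_boot.

(* An evaluation derivation is a finite object: it queries g only at the
   finitely many points it records, and it remains a valid derivation for any
   g' agreeing with g there and any assignment agreeing on the free variables.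
   For a closed term, one derivation under f therefore works for every g that
   agrees with f up to the largest queried point k, with the same queries. *)

Lemma fv_subst_const y k t z :
  fv (subst y (TConst k) t) z -> (z != y) && fv t z.
Proof.
elim: t => [x|n|n w ts IH|m G ts IH|t IH|G x u IHu v IHv] /=.
- by case: eqP => [->|/eqP Hxy] //= /eqP <-; rewrite eqxx andbT.
- by [].
- by case/existsP=> i /IH /andP[-> ?]; apply/existsP; exists i.
- by case/existsP=> i /IH /andP[-> ?]; apply/existsP; exists i.
- exact: IH.
- case: eqP => [->|_] /=.
  + by case/orP=> [/andP[-> ->]|/IHv /andP[-> ->]]; rewrite ?orbT.
  + by case/orP=> [/andP[-> /IHu /andP[-> ->]]|/IHv /andP[-> ->]]; rewrite ?orbT.
Qed.

Lemma mem_flatten_enum {I : finType} {qs : I -> seq nat} {j x} :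
  x \in qs j -> x \in flatten [seq qs i | i <- enum I].
Proof. by move=> Hx; apply/flatten_mapP; exists j; rewrite ?mem_enum. Qed.

Lemma Eval_congr {g s t n q} : Eval g s t n q ->
  forall g' s', {in q, g' =1 g} -> (forall z, fv t z -> s' z = s z) ->
  Eval g' s' t n q.
Proof.
elim=> {t n q}.
- by move=> x g' s' _ Hs; rewrite -Hs /= ?eqxx //; constructor.
- by move=> *; constructor.
- move=> m w ts vs qs _ IH g' s' Hg Hs; constructor=> i; apply: IH.
  + by move=> x Hx; apply/Hg/mem_flatten_enum/Hx.
  + by move=> z Hz; apply: Hs; apply/existsP; exists i.
- move=> m G ts vs qs _ IH g' s' Hg Hs; constructor=> i; apply: IH.
  + by move=> x Hx; apply/Hg/mem_flatten_enum/Hx.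
  + by move=> z Hz; apply: Hs; apply/existsP; exists i.
- move=> t n q _ IH g' s' Hg Hs.
  rewrite -Hg ?mem_rcons ?mem_head //; constructor; apply: IH => //.
  by move=> x Hx; apply: Hg; rewrite mem_rcons in_cons Hx orbT.
- move=> G x u v m qv vs qs _ IHv _ IH g' s' Hg Hs; constructor.
  + apply: IHv; first by move=> i Hi; apply: Hg; rewrite mem_cat Hi.
    by move=> z Hz; apply: Hs => /=; rewrite Hz orbT.
  + move=> k; apply: IH.
    * by move=> i Hi; apply: Hg; rewrite mem_cat (mem_flatten_enum Hi) orbT.
    * by move=> z /fv_subst_const Hz; apply: Hs => /=; rewrite Hz.
Qed.

Lemma Eval_closed {g s t n q} : (forall z, ~~ fv t z) -> Eval g s t n q ->
  forall g' s', {in q, g' =1 g} -> Eval g' s' t n q.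
Proof.
move=> closed_t Ht g' s' Hg; apply: (Eval_congr Ht _ _ Hg) => z Hz.
by move: (closed_t z); rewrite Hz.
Qed.

Lemma all_leq_bigmax (q : seq nat) : all (fun i => i <= \max_(j <- q) j) q.
Proof. by apply/allP=> i Hi; apply: leq_bigmax_seq. Qed.

Theorem lemma3p5 (u : term) (c : nat) (hu : forall z, ~~ fv u z)
  (f : nat -> nat) :
  models_eq f u c <->
  exists k : nat, forall g : nat -> nat,
    (forall i, i <= k -> g i = f i) -> models_eq_bounded g u c k.
Proof.
split=> [models_f | [k bounded]].
- have [q Hq] := models_f (fun=> 0).
  exists (\max_(j <- q) j) => g Hg s; exists q; split; last exact: all_leq_bigmax.
  apply: (Eval_closed hu Hq) => i Hi.
  exact/Hg/(allP (all_leq_bigmax q)).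
- move=> s; have [q [Hq _]] := bounded f (fun _ _ => erefl) s.
  by exists q.
Qed.
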